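(* Let $a$ be a positive integer and define $(U_n)_{n\ge1}$ by $U_1=a$, $U_2=3a$ and $U_{n+2}=U_{n+1}+U_n$ for $n\ge1$. Then $(U_n)$ is exactly realizable.
   Context: For a homeomorphism $f:X\to X$ of a compact metric space $X$, let $\mathrm{Per}_n(f)=\#\{x\in X\mid f^n x=x\}$. A sequence $(U_n)_{n\ge1}$ of non-negative integers is called exactly realizable if there exist a compact metric space $X$ and a homeomorphism $f:X\to X$ with $\mathrm{Per}_n(f)=U_n$ for all $n\ge1$. *)

From HB Require Import structures.
From mathcomp Require Import all_boot all_order all_algebra.
From mathcomp Require Import all_classical all_reals all_analysis.
From mathcomp Require Import Rstruct Rstruct_topology.
From Stdlib Require Import Rdefinitions.
Set Implicit Arguments. Unset Strict Implicit. Unset Printing Implicit Defensive.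
Local Open Scope classical_set_scope.
Local Open Scope card_scope.

(* A compact metric space is modelled as a Hausdorff (i.e. metric, not merely
   pseudometric) pseudoMetricType over the Stdlib reals whose whole space is
   compact. *)
Definition exactly_realizable (U : nat -> nat) : Prop :=
  exists (X : pseudoMetricType R) (f g : X -> X),
    hausdorff_space X /\ compact [set: X] /\
    continuous f /\ continuous g /\ cancel f g /\ cancel g f /\
    forall n : nat, (1 <= n)%N -> [set x : X | iter n f x = x] #= `I_(U n).

(* The sequence is U_n = a L_n, with L_n the Lucas numbers (L_1 = 1, L_2 = 3).
   L_n is the trace of A^n for the golden-mean matrix A = [[1,1],[1,0]], i.e. the
   number of cyclic 0-1 words of length n without two cyclically adjacent 1s, and
   these words are exactly the windows of the points of period n of the golden-mean
   shift: bi-infinite 0-1 sequences with no two consecutive 1s.  That shift is a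
   closed subset of the compact metrizable product {0,1}^Z and the left shift is a
   homeomorphism of it.  Colouring each sequence by a constant colour in 'I_a
   yields a disjoint copies of this system, multiplying all the counts by a. *)

From mathcomp Require Import all_boot all_algebra zify.
From mathcomp Require Import all_classical all_analysis.
From mathcomp Require Import Rstruct.
Set Implicit Arguments. Unset Strict Implicit. Unset Printing Implicit Defensive.
Import GRing.Theory.
Local Open Scope classical_set_scope.
Local Open Scope card_scope.

Section Words.
Variable K : finType.

Fixpoint words (n : nat) : seq (seq K) :=
  if n is m.+1 then [seq x :: w | x <- index_enum K, w <- words m] else [:: [::]].

Lemma mem_words n w : (w \in words n) = (size w == n).
Proof.
elim: n w => [|n IHn] [|x w] //=.
  by apply/allpairsP => -[[? ?] [_ _]].
rewrite eqSS -IHn; apply/allpairsP/idP => [[[y v] [_ /= + [_ ->]]] //|wn].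
by exists (x, w); rewrite mem_index_enum.
Qed.

Lemma words_uniq n : uniq (words n).
Proof.
elim: n => //= n IHn; apply: allpairs_uniq => //; first exact: index_enum_uniq.
by move=> [? ?] [? ?] _ _ [-> ->].
Qed.

Lemma count_wordsS (p : pred (seq K)) n :
  count p (words n.+1) = \sum_(x : K) count (fun w => p (x :: w)) (words n).
Proof.
rewrite /= /allpairs_dep count_flatten sumnE !big_map.
by apply: eq_bigr => x _; rewrite count_map.
Qed.

End Words.

Section Walks.
Variables (K : finType) (P : rel K).

(* The (u, v) entry of the (m+1)-th power of the 0/1 matrix of P. *)
Definition walks u m v := count (fun w => path P u (rcons w v)) (words K m).

Lemma walks0 u v : walks u 0 v = P u v.
Proof. by rewrite /walks /= andbT addn0. Qed.

Lemma walksS u m v : walks u m.+1 v = \sum_(x : K) P u x * walks x m v.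
Proof.
rewrite /walks count_wordsS; apply: eq_bigr => x _ /=.
by case: (P u x); rewrite (mul1n, mul0n) // count_pred0.
Qed.

Lemma count_cycle_words m :
  count (cycle P) (words K m.+1) = \sum_(u : K) walks u m u.
Proof. by rewrite count_wordsS. Qed.

End Walks.

Lemma sum_pred1_muln (I : finType) (c : I) (F : I -> nat) :
  \sum_(e : I) (c == e) * F e = F c.
Proof.
rewrite (bigD1 c) //= eqxx mul1n big1 ?addn0 // => e /negbTE.
by rewrite eq_sym => ->.
Qed.

Section Colours.
Variables (K L : finType) (P : rel K).

(* [L] disjoint copies of the shift of [P]: colours never change along a sequence. *)
Definition colour_rel : rel (K * L) := fun u v => P u.1 v.1 && (u.2 == v.2).

Lemma walks_colour_rel u c m v d :
  walks colour_rel (u, c) m (v, d) = (c == d) * walks P u m v.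
Proof.
elim: m u c => [|m IHm] u c; first by rewrite !walks0 mulnb andbC.
rewrite !walksS big_distrr.
transitivity (\sum_x \sum_e colour_rel (u, c) (x, e) * walks colour_rel (x, e) m (v, d)).
  by rewrite pair_bigA; apply: eq_bigr => -[].
apply: eq_bigr => x _.
have summand e : colour_rel (u, c) (x, e) * walks colour_rel (x, e) m (v, d)
    = (c == e) * ((e == d) * (P u x * walks P x m v)).
  by rewrite IHm -mulnb /= [P u x * _]mulnC -mulnA [P u x * (_ * _)]mulnCA.
by rewrite (eq_bigr _ (fun e _ => summand e)) sum_pred1_muln.
Qed.

Lemma count_cycle_colour_rel m :
  count (cycle colour_rel) (words (K * L)%type m.+1)
  = #|L| * count (cycle P) (words K m.+1).
Proof.
rewrite !count_cycle_words big_distrr.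
transitivity (\sum_x \sum_(e : L) walks colour_rel (x, e) m (x, e)).
  by rewrite pair_bigA; apply: eq_bigr => -[].
apply: eq_bigr => x _.
under eq_bigr => e _ do rewrite walks_colour_rel eqxx mul1n.
by rewrite sum_nat_const.
Qed.

End Colours.

Definition golden (u v : bool) : bool := ~~ (u && v).

Lemma count_cycle_golden1 : count (cycle golden) (words bool 1) = 1.
Proof. by rewrite count_cycle_words big_bool !walks0. Qed.

Lemma count_cycle_golden2 : count (cycle golden) (words bool 2) = 3.
Proof. by rewrite count_cycle_words big_bool !walksS !big_bool !walks0. Qed.

Lemma count_cycle_goldenSS m :
  count (cycle golden) (words bool m.+3)
  = count (cycle golden) (words bool m.+2) + count (cycle golden) (words bool m.+1).
Proof.
rewrite !count_cycle_words !big_bool !walksS !big_bool !walksS !big_bool /golden /=.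
lia.
Qed.

Lemma cycle_nthP (T : Type) (e : rel T) (x0 : T) (w : seq T) :
  reflect (forall k, k < size w -> e (nth x0 w k) (nth x0 w (k.+1 %% size w)))
          (cycle e w).
Proof.
case: w => [|y p] /=; first by left.
have nth_head k : k < (size p).+1 -> nth x0 (y :: rcons p y) k = nth x0 (y :: p) k.
  by move=> lt_k; rewrite -rcons_cons nth_rcons /= lt_k.
have nth_next k : k < (size p).+1 ->
    nth x0 (rcons p y) k = nth x0 (y :: p) (k.+1 %% (size p).+1).
  rewrite ltnS leq_eqVlt nth_rcons => /orP [/eqP -> | lt_k].
    by rewrite ltnn eqxx modnn.
  by rewrite lt_k modn_small.
apply: (iffP (pathP x0)); rewrite size_rcons => h k lt_k.
  by rewrite -nth_head // -nth_next //; exact: h.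
by rewrite nth_head // nth_next //; exact: h.
Qed.

Section Periodic.
Local Open Scope ring_scope.
Variables (T : Type) (n : nat).
Hypothesis n_gt0 : (0 < n)%N.

Definition periodic (x : int -> T) := forall i : int, x (i + n) = x i.

Lemma absz_modz (i : int) : (absz (i %% n)%Z)%:Z = (i %% n)%Z.
Proof. by apply: gez0_abs; apply: modz_ge0; rewrite eqz_nat -lt0n. Qed.

Lemma absz_modz_lt (i : int) : (absz (i %% n)%Z < n)%N.
Proof. by rewrite -ltz_nat absz_modz ltz_pmod // ltz_nat. Qed.

Lemma absz_modzS (i : int) : absz ((i + 1) %% n)%Z = ((absz (i %% n)%Z).+1 %% n)%N.
Proof.
apply/eqP; rewrite -eqz_nat absz_modz -modz_nat -addn1 PoszD absz_modz.
by rewrite modzDml.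
Qed.

Lemma periodic_modz x : periodic x -> forall i, x i = x (i %% n)%Z.
Proof.
move=> px i; rewrite {1}(divz_eq i n) addrC; move: (i %/ n)%Z (i %% n)%Z => k j.
elim/int_rec: k j => [|k IHk|k IHk] j; first by rewrite mul0r addr0.
  by rewrite -addn1 PoszD mulrDl mul1r addrA px.
by rewrite -[LHS]px -[RHS](IHk j); congr x; lia.
Qed.

Definition window (x : int -> T) : seq T := mkseq (fun k => x k) n.

Lemma periodic_window_inj x y :
  periodic x -> periodic y -> window x = window y -> x = y.
Proof.
move=> px py exy; apply/funext => i.
rewrite (periodic_modz px) (periodic_modz py) -absz_modz.
have := congr1 (fun w => nth (x 0) w (absz (i %% n)%Z)) exy.
by rewrite /= !nth_mkseq // absz_modz_lt.
Qed.

End Periodic.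

Section CyclicExtension.
Local Open Scope ring_scope.
Variables (T : Type) (x0 : T) (w : seq T).

Definition cyclic_ext (i : int) : T := nth x0 w (absz (i %% size w)%Z).

Lemma periodic_cyclic_ext : periodic (size w) cyclic_ext.
Proof. by move=> i; rewrite /cyclic_ext modzDr. Qed.

Lemma window_cyclic_ext : window (size w) cyclic_ext = w.
Proof.
rewrite -[RHS](mkseq_nth x0); apply/eq_in_map => k; rewrite mem_iota => /andP [_ lt_k].
by rewrite /cyclic_ext modz_nat modn_small.
Qed.

End CyclicExtension.

Section SetTypeTopology.
Variables (X : topologicalType) (A : set X).

Local Notation val := (@set_val X A).

Lemma set_type_compact : compact A -> compact [set: set_type A].
Proof.
move=> cptA F PF _.
have FA : F (val @^-1` A) by apply: filterE => s; exact: set_valP.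
have [b [Ab clb]] := cptA _ (fmap_proper_filter val PF) FA.
exists (exist _ b (mem_set Ab)); split => // B C FB [_ [[W oW <-] /= Wb WC]].
have FB' : F (val @^-1` (val @` B)) by apply: filterS FB => s Bs; exists s.
have [_ [[s Bs <-] Ws]] := clb _ _ FB' (open_nbhs_nbhs (conj oW Wb)).
by exists s; split => //; exact: WC.
Qed.

Lemma set_type_hausdorff : hausdorff_space X -> hausdorff_space (set_type A).
Proof.
move=> hX p q clpq; apply: val_inj; apply: hX => B C pB qC.
have [s [Bs Cs]] := clpq _ _ (initial_continuous pB) (initial_continuous qC).
by exists (val s).
Qed.

End SetTypeTopology.

Section ShiftSpace.
Local Open Scope ring_scope.
Variables (K : finType) (P : rel K).

Definition full_shift : Type := prod_topology (fun _ : int => discrete_topology K).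

Lemma full_shift_compact : compact [set: full_shift].
Proof.
have := tychonoff (fun i : int => @finite_compact (discrete_topology K) setT finite_finset).
by congr compact; rewrite eqEsubset.
Qed.

Lemma full_shift_hausdorff : hausdorff_space full_shift.
Proof. by apply: hausdorff_product => ?; exact: discrete_hausdorff. Qed.

Lemma nbhs_coord (x : full_shift) (i : int) : nbhs x [set y : full_shift | y i = x i].
Proof.
exact: (@proj_continuous int (fun _ => discrete_topology K) i x _ (discrete_set1 (x i))).
Qed.

Definition shift (d : int) (x : full_shift) : full_shift := fun i => x (i + d).

Lemma shift_continuous d : continuous (shift d).
Proof.
move=> x; apply: (proj2 (@pointwise_cvgP (discrete_topology int) (discrete_topology K)
  (shift d @ nbhs x) (shift d x) _)) => i.
exact: (@proj_continuous int (fun _ => discrete_topology K) (i + d) x).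
Qed.

Definition allowed : set full_shift := [set x | forall i, P (x i) (x (i + 1))].

Lemma allowed_closed : closed allowed.
Proof.
move=> x clx i.
have [y [Py [/= <- <-]]] := clx _ (filterI (nbhs_coord x i) (nbhs_coord x (i + 1))).
exact: Py.
Qed.

Definition sft : Type := set_type allowed.

Lemma sft_compact : compact [set: sft].
Proof. exact/set_type_compact/(subclosed_compact allowed_closed full_shift_compact). Qed.

Lemma sft_hausdorff : hausdorff_space sft.
Proof. exact/set_type_hausdorff/full_shift_hausdorff. Qed.

Lemma allowed_shift d x : allowed x -> allowed (shift d x).
Proof. by move=> Px i; rewrite /shift addrAC; exact: Px. Qed.

Definition sft_shift d (s : sft) : sft :=
  exist _ (shift d (set_val s)) (mem_set (allowed_shift d (set_valP s))).

Lemma sft_shift_continuous d : continuous (sft_shift d).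
Proof.
apply: (@continuous_comp_initial _ _ _ (@set_val _ allowed)).
have -> : set_val \o sft_shift d = shift d \o set_val by [].
move=> s; apply: continuous_comp; last exact: shift_continuous.
exact: initial_continuous.
Qed.

Lemma val_sft_shift d s : val (sft_shift d s) = shift d (val s).
Proof. by []. Qed.

Lemma sft_shiftK d : cancel (sft_shift d) (sft_shift (- d)).
Proof.
by move=> s; apply: val_inj; apply/funext => i; rewrite !val_sft_shift /shift addrNK.
Qed.

Lemma sft_shiftNK d : cancel (sft_shift (- d)) (sft_shift d).
Proof.
by move=> s; apply: val_inj; apply/funext => i; rewrite !val_sft_shift /shift addrK.
Qed.

Lemma val_iter_sft_shift n (s : sft) : val (iter n (sft_shift 1) s) = shift n (val s).
Proof.
elim: n => [|n IHn]; apply/funext => i; first by rewrite /shift addr0.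
by rewrite iterS val_sft_shift IHn /shift -addrA (addrC 1) -addn1 PoszD.
Qed.

Lemma allowed_window_cycle n x :
  (0 < n)%N -> allowed x -> periodic n x -> cycle P (window n x).
Proof.
move=> n_gt0 Px px; apply/(cycle_nthP P (x 0)) => k; rewrite size_mkseq => lt_k.
rewrite !nth_mkseq ?ltn_pmod // -modz_nat -(periodic_modz n_gt0 px) -addn1 PoszD.
exact: Px.
Qed.

Lemma allowed_cyclic_ext x0 w :
  (0 < size w)%N -> cycle P w -> allowed (cyclic_ext x0 w).
Proof.
move=> w_gt0 /(cycle_nthP P x0) cw i; rewrite /cyclic_ext absz_modzS //.
exact/cw/absz_modz_lt.
Qed.

Definition cyclic_words n := [seq w <- words K n | cycle P w].

Lemma fixed_point_periodic n (s : sft) :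
  iter n (sft_shift 1) s = s -> periodic n (val s).
Proof. by move=> /(congr1 val); rewrite val_iter_sft_shift => e i; rewrite -[in RHS]e. Qed.

Lemma window_fixed_point n (s : sft) : (0 < n)%N -> iter n (sft_shift 1) s = s ->
  window n (val s) \in cyclic_words n.
Proof.
move=> n_gt0 fs; rewrite mem_filter mem_words size_mkseq eqxx andbT.
exact: allowed_window_cycle n_gt0 (set_valP s) (fixed_point_periodic fs).
Qed.

Lemma cyclic_word_fixed_point n w : (0 < n)%N -> w \in cyclic_words n ->
  exists2 s : sft, iter n (sft_shift 1) s = s & window n (val s) = w.
Proof.
rewrite mem_filter mem_words => n_gt0 /andP [cw /eqP sw].
case: w => [|x0 p] in cw sw *; first by rewrite -sw in n_gt0.
set w := x0 :: p in cw sw *.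
have Pw : allowed (cyclic_ext x0 w) by apply: allowed_cyclic_ext; rewrite ?sw.
exists (exist (fun x => x \in allowed) _ (mem_set Pw)).
  apply: val_inj; rewrite val_iter_sft_shift; apply/funext => i.
  by rewrite /shift -sw; exact: periodic_cyclic_ext.
by rewrite -sw window_cyclic_ext.
Qed.

Lemma card_fixed_points n : (0 < n)%N ->
  [set s : sft | iter n (sft_shift 1) s = s] #= `I_(size (cyclic_words n)).
Proof.
move=> n_gt0; set Fix := [set s | _].
pose code (s : sft) := index (window n (val s)) (cyclic_words n).
have code_inj : {in Fix &, injective code}.
  move=> s t /set_mem fs /set_mem ft /(congr1 (nth [::] (cyclic_words n))).
  rewrite !nth_index ?window_fixed_point // => wst; apply: val_inj.
  exact: (periodic_window_inj n_gt0 (fixed_point_periodic fs) (fixed_point_periodic ft) wst).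
have -> : `I_(size (cyclic_words n)) = code @` Fix.
  apply/seteqP; split => [k /= lt_k | _ [s fs <-]]; last first.
    by rewrite /= /code index_mem; exact: window_fixed_point.
  have [s fs ws] := cyclic_word_fixed_point n_gt0 (mem_nth [::] lt_k).
  by exists s => //; rewrite /code ws index_uniq // filter_uniq // words_uniq.
by rewrite card_eq_sym; exact: inj_card_eq.
Qed.

End ShiftSpace.

Lemma sft_exactly_realizable (K : finType) (P : rel K) :
  exactly_realizable (fun n => count (cycle P) (words K n)).
Proof.
exists (sft P : pseudoMetricType Rdefinitions.R).
exists (@sft_shift K P 1), (@sft_shift K P (-1)%R).
split; first exact: sft_hausdorff.
split; first exact: sft_compact.
split; first exact: sft_shift_continuous.
split; first exact: sft_shift_continuous.
split; first exact: sft_shiftK.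
split; first exact: sft_shiftNK.
by move=> n n_gt0; rewrite -size_filter; exact: card_fixed_points.
Qed.

Lemma exactly_realizable_eq (U V : nat -> nat) :
  (forall n, (0 < n)%N -> U n = V n) -> exactly_realizable U -> exactly_realizable V.
Proof.
move=> eUV [X [f [g [? [? [? [? [? [? perU]]]]]]]]]; exists X, f, g; do !split => //.
by move=> n n_gt0; rewrite -eUV //; exact: perU.
Qed.

Lemma eq_fibonacci_rec (U V : nat -> nat) :
  U 1 = V 1 -> U 2 = V 2 ->
  (forall n, (1 <= n)%N -> U n.+2 = U n.+1 + U n) ->
  (forall n, (1 <= n)%N -> V n.+2 = V n.+1 + V n) ->
  forall n, (0 < n)%N -> U n = V n.
Proof.
move=> eUV1 eUV2 recU recV.
suff eUV n : U n.+1 = V n.+1 /\ U n.+2 = V n.+2 by case=> // n _; case: (eUV n).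
by elim: n => [|n [IH1 IH2]] //; split => //; rewrite recU // recV // IH1 IH2.
Qed.

Theorem lemma2 (a : nat) (U : nat -> nat) (ha : (0 < a)%N)
  (hU1 : U 1%N = a) (hU2 : U 2%N = (3 * a)%N)
  (hrec : forall n : nat, (1 <= n)%N -> U n.+2 = (U n.+1 + U n)%N) :
  exactly_realizable U.
Proof.
have golden_U : forall n, (0 < n)%N -> a * count (cycle golden) (words bool n) = U n.
  apply: eq_fibonacci_rec hrec => [|| n n_ge1].
  - by rewrite count_cycle_golden1 muln1 hU1.
  - by rewrite count_cycle_golden2 hU2 mulnC.
  - by case: n n_ge1 => // m _; rewrite count_cycle_goldenSS mulnDr.
apply: exactly_realizable_eq (sft_exactly_realizable (@colour_rel bool 'I_a golden)).
by case=> // m _; rewrite count_cycle_colour_rel card_ord golden_U.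
Qed.
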